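(* Assume (A1)–(A5) hold and let $\{u_k\}_{k\ge0}$ be the exact-data iteration defined below. Then $\{u_k\}_{k\ge0}$ converges to a solution $u^\dagger$ of $\mathcal F(u)=v$.
   Context: Spaces and operator. Let $\mathcal U=\mathbb R^N$ and $\mathcal V=\mathbb R^M$ carry the Euclidean inner product and norm. Let $\mathcal F:\mathcal D(\mathcal F)\subset\mathcal U\to\mathcal V$ be a (possibly nonlinear) operator, let $v\in\mathcal V$ be exact data, and let $\mathcal B_r(x)$ denote the closed ball of radius $r$ centred at $x$. Images and graph Laplacian. Elements of $\mathcal U$ are images on a pixel grid $\mathcal S=\{1,\dots,p\}\times\{1,\dots,q\}$ with $N=pq$. Fix $R\in(0,\infty)$, $\lambda>0$ and a metric $d$ on $\mathcal S$. For $u\in\mathcal U$, define $$(W_u)_{ab}=\mathbf 1_{(0,R]}(d(a,b))\exp(-|u(a)-u(b)|^2/\lambda),$$ let $D_u$ be the diagonal matrix of row sums of $W_u$, and set $\Delta_u=D_u-W_u$. Exact-data iteration. Let $\Psi:\mathcal V\to\mathcal U$ be a reconstruction map and set $u_0=\Psi(v)$. Define $$u_{k+1}=u_k-\alpha_k\mathcal F'(u_k)^*(\mathcal F(u_k)-v)-\beta_k\Delta_{u_k}u_k,$$ with $$\alpha_k=\min\Big\{\frac{\zeta_0\|\mathcal F(u_k)-v\|}{\|\mathcal F'(u_k)^*(\mathcal F(u_k)-v)\|},\zeta_1\Big\}.$$ If $\|\Delta_{u_k}u_k\|\ne0$, then $$\beta_k=\min\Big\{\frac{\nu_0\|\mathcal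 F(u_k)-v\|^2}{\|\Delta_{u_k}u_k\|},\frac{\nu_1}{\|\Delta_{u_k}u_k\|},\nu_2\Big\},$$ and otherwise $\beta_k=0$. Here $\zeta_0,\zeta_1,\nu_0,\nu_1,\nu_2>0$ are constants, and $\zeta>0$ is a constant with $\zeta\le\alpha_k$ for all $k$. Operator assumptions. There exist $\wp>0$, $B>0$, $\eta\in[0,1)$ and $L\ge0$ such that for all $u,w\in\mathcal B_{3\wp}(u_0)\subset\mathcal D(\mathcal F)$: - (A1) $\mathcal F$ is Fréchet differentiable with $u\mapsto\mathcal F'(u)$ continuous; - (A2) $\|\mathcal F'(u)\|\le B$; - (A3) $\|\mathcal F(u)-\mathcal F(w)-\mathcal F'(w)(u-w)\|\le\eta\|\mathcal F(u)-\mathcal F(w)\|$; - (A4) $\|\mathcal F'(u)-\mathcal F'(w)\|\le L\|u-w\|$; - (A5) there exists $u^\dagger\in\mathcal B_\wp(u_0)$ with $\mathcal F(u^\dagger)=v$. Standing parameter condition. Fix $\mathcal H>\frac{1+\eta}{1-\eta}$, and assume $$\zeta>\frac{\nu_0(\wp+\nu_1)+\zeta_0^2}{1-\eta-\frac{1+\eta}{\mathcal H}} .$$ *)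

From HB Require Import structures.
From mathcomp Require Import all_boot all_order all_algebra.
From mathcomp Require Import all_classical all_reals all_analysis.
Set Implicit Arguments. Unset Strict Implicit. Unset Printing Implicit Defensive.
Import Order.TTheory GRing.Theory Num.Theory.
Local Open Scope ring_scope.

Section Defs.
Variable R : realType.

Definition enorm n (x : 'cV[R]_n) : R := Num.sqrt (\sum_i (x i 0) ^+ 2).

Definition cball n (c : 'cV[R]_n) (r : R) (x : 'cV[R]_n) : Prop :=
  enorm (x - c) <= r.

Definition opnorm_le m n (A : 'M[R]_(m, n)) (c : R) : Prop :=
  forall h : 'cV[R]_n, enorm (A *m h) <= c * enorm h.

(* F is Frechet differentiable at u (relative to its domain D) with
   derivative the matrix Fd u, i.e. F'(u) h = Fd u *m h *)
Definition frechet_at m n (D : 'cV[R]_n -> Prop) (F : 'cV[R]_n -> 'cV[R]_m)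
  (Fd : 'cV[R]_n -> 'M[R]_(m, n)) (u : 'cV[R]_n) : Prop :=
  forall eps : R, 0 < eps -> exists delta : R, 0 < delta /\
    forall w, D w -> enorm (w - u) < delta ->
      enorm (F w - F u - Fd u *m (w - u)) <= eps * enorm (w - u).

Definition deriv_cont_at m n (S : 'cV[R]_n -> Prop)
  (Fd : 'cV[R]_n -> 'M[R]_(m, n)) (u : 'cV[R]_n) : Prop :=
  forall eps : R, 0 < eps -> exists delta : R, 0 < delta /\
    forall w, S w -> enorm (w - u) < delta -> opnorm_le (Fd w - Fd u) eps.

Definition converges_to n (u : nat -> 'cV[R]_n) (x : 'cV[R]_n) : Prop :=
  forall eps : R, 0 < eps -> exists K : nat, forall k, (K <= k)%N ->
    enorm (u k - x) < eps.

Definition is_metric (T : eqType) (d : T -> T -> R) : Prop :=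
  (forall a b, 0 <= d a b) /\ (forall a b, d a b = 0 <-> a = b) /\
  (forall a b, d a b = d b a) /\ (forall a b c, d a c <= d a b + d b c).

(* Images: U = R^(p*q), pixel a = (i,j) in S = 'I_p * 'I_q; a vector u
   is identified with an image through MathComp's mxvec indexing. *)
Definition pix p q (u : 'cV[R]_(p * q)) (a : 'I_p * 'I_q) : R :=
  u (mxvec_index a.1 a.2) 0.

Definition Wgt p q (Rad lam : R) (d : 'I_p * 'I_q -> 'I_p * 'I_q -> R)
  (u : 'cV[R]_(p * q)) (a b : 'I_p * 'I_q) : R :=
  if (0 < d a b) && (d a b <= Rad)
  then expR (- ((pix u a - pix u b) ^+ 2) / lam) else 0.

Definition Deg p q Rad lam d (u : 'cV[R]_(p * q)) (a b : 'I_p * 'I_q) : R :=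
  if a == b then \sum_c Wgt Rad lam d u a c else 0.

Definition Lap p q Rad lam d (u : 'cV[R]_(p * q)) (a b : 'I_p * 'I_q) : R :=
  Deg Rad lam d u a b - Wgt Rad lam d u a b.

Definition Lap_apply p q Rad lam d (w x : 'cV[R]_(p * q)) : 'cV[R]_(p * q) :=
  (mxvec (\matrix_(i < p, j < q)
     \sum_b Lap Rad lam d w (i, j) b * pix x b))^T.

End Defs.

(* The iterates are Fejer monotone with respect to every solution z near u_0.
   With e = u_k - z and r_k = F(u_k) - v, the tangential cone condition (A3)
   gives <e, F'(u_k)^* r_k> >= (1 - eta) |r_k|^2, and the step-size rules bound
   the Landweber step by zeta0 |r_k| and the Laplacian step by nu0 |r_k|^2 and
   by nu1 (this is the only way the Laplacian enters), so that
   |u_{k+1} - z|^2 <= |u_k - z|^2 - c |r_k|^2 with c > 0 by the standing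
   parameter condition.  Hence the residuals tend to 0 and the bounded iterates
   have a cluster point, which solves F(u) = v because (A2) and (A3) make F
   Lipschitz up to the factor 1 / (1 - eta).  Fejer monotonicity with respect
   to that cluster point then forces the whole sequence to converge to it. *)

From HB Require Import structures.
From mathcomp Require Import all_boot all_order all_algebra.
From mathcomp Require Import all_classical all_reals all_analysis.
From mathcomp Require Import ring lra.
Import Order.TTheory GRing.Theory Num.Theory.
Local Open Scope ring_scope.
Set Implicit Arguments. Unset Strict Implicit. Unset Printing Implicit Defensive.

Section Euclidean.
Variables (R : realType) (n : nat).
Implicit Types (x y z : 'cV[R]_n) (a : R).

Definition dot x y : R := (x^T *m y) 0 0.

Lemma dotE x y : dot x y = \sum_i x i 0 * y i 0.
Proof. by rewrite /dot mxE; apply: eq_bigr => i _; rewrite mxE. Qed.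

Lemma dotC x y : dot x y = dot y x.
Proof. by rewrite !dotE; apply: eq_bigr => i _; rewrite mulrC. Qed.

Lemma dotDl x y z : dot (x + y) z = dot x z + dot y z.
Proof. by rewrite /dot linearD mulmxDl mxE. Qed.

Lemma dotZl a x y : dot (a *: x) y = a * dot x y.
Proof. by rewrite /dot linearZ -scalemxAl mxE. Qed.

Lemma dotNl x y : dot (- x) y = - dot x y.
Proof. by rewrite -scaleN1r dotZl mulN1r. Qed.

Lemma dotDr x y z : dot x (y + z) = dot x y + dot x z.
Proof. by rewrite dotC dotDl !(dotC x). Qed.

Lemma dotZr a x y : dot x (a *: y) = a * dot x y.
Proof. by rewrite dotC dotZl dotC. Qed.

Lemma dotNr x y : dot x (- y) = - dot x y.
Proof. by rewrite dotC dotNl dotC. Qed.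

Lemma dot_ge0 x : 0 <= dot x x.
Proof. by rewrite dotE; apply: sumr_ge0 => i _; rewrite -expr2 sqr_ge0. Qed.

Lemma enorm_ge0 x : 0 <= enorm x.
Proof. exact: sqrtr_ge0. Qed.

Lemma enorm_sqr x : enorm x ^+ 2 = dot x x.
Proof.
rewrite /enorm sqr_sqrtr; last by apply: sumr_ge0 => i _; rewrite sqr_ge0.
by rewrite dotE; apply: eq_bigr => i _; rewrite expr2.
Qed.

Lemma enormE x : enorm x = Num.sqrt (dot x x).
Proof. by rewrite -enorm_sqr sqrtr_sqr ger0_norm ?enorm_ge0. Qed.

Lemma enormZ a x : enorm (a *: x) = `|a| * enorm x.
Proof. by rewrite !enormE dotZl dotZr mulrA -expr2 sqrtrM ?sqr_ge0 // sqrtr_sqr. Qed.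

Lemma enorm_eq0 x : enorm x = 0 -> x = 0.
Proof.
move=> x0; apply/matrixP => i j; rewrite (ord1 j) mxE; apply/eqP.
have /psumr_eq0P/(_ i isT)/eqP : \sum_i x i 0 * x i 0 = 0.
  by rewrite -dotE -enorm_sqr x0 expr0n.
by rewrite mulf_eq0 orbb; apply => k _; rewrite -expr2 sqr_ge0.
Qed.

Lemma enorm0 : enorm (0 : 'cV[R]_n) = 0.
Proof. by rewrite /enorm big1 ?sqrtr0 // => i _; rewrite mxE expr0n. Qed.

Lemma enormN x : enorm (- x) = enorm x.
Proof. by rewrite /enorm; congr Num.sqrt; apply: eq_bigr => i _; rewrite mxE sqrrN. Qed.

Lemma enormB x y : enorm (x - y) = enorm (y - x).
Proof. by rewrite -enormN opprB. Qed.

Lemma enormD_sqr x y : enorm (x + y) ^+ 2 = enorm x ^+ 2 + 2 * dot x y + enorm y ^+ 2.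
Proof. by rewrite !enorm_sqr dotDl !dotDr (dotC y x); ring. Qed.

Lemma enormB_sqr x y : enorm (x - y) ^+ 2 = enorm x ^+ 2 - 2 * dot x y + enorm y ^+ 2.
Proof. by rewrite enormD_sqr dotNr enormN mulrN. Qed.

Lemma dot_le_enorm x y : dot x y <= enorm x * enorm y.
Proof.
set a := enorm x; set b := enorm y.
have [ab0|ab_neq0] := eqVneq (a * b) 0.
  move/eqP: ab0; rewrite mulf_eq0 => /orP[] /eqP/enorm_eq0 ->.
    by rewrite -(scale0r 0) dotZl mul0r mulr_ge0 ?enorm_ge0.
  by rewrite -(scale0r 0) dotZr mul0r mulr_ge0 ?enorm_ge0.
have ab_gt0 : 0 < a * b by rewrite lt_def ab_neq0 mulr_ge0 ?enorm_ge0.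
have := dot_ge0 (b *: x + (- a) *: y).
rewrite dotDl !dotDr !(dotZl, dotZr) -!enorm_sqr (dotC y x) -/a -/b => h.
by rewrite -(ler_pM2l ab_gt0); nra.
Qed.

Lemma dot_ge_enorm x y : - (enorm x * enorm y) <= dot x y.
Proof. by rewrite lerNl -mulN1r -dotZl scaleN1r -(enormN x) dot_le_enorm. Qed.

Lemma enormD x y : enorm (x + y) <= enorm x + enorm y.
Proof.
rewrite -(ler_pXn2r (n := 2)) ?nnegrE ?addr_ge0 ?enorm_ge0 //.
by rewrite enormD_sqr; have := dot_le_enorm x y; nra.
Qed.

Lemma enorm_triangle x y z : enorm (x - z) <= enorm (x - y) + enorm (y - z).
Proof. by have := enormD (x - y) (y - z); rewrite addrA subrK. Qed.

Lemma coord_le_enorm x i : `|x i 0| <= enorm x.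
Proof.
rewrite -(ler_pXn2r (n := 2)) ?nnegrE ?enorm_ge0 // enorm_sqr dotE.
rewrite real_normK ?num_real // (bigD1 i) //= expr2 lerDl.
by apply: sumr_ge0 => j _; rewrite -expr2 sqr_ge0.
Qed.

Lemma enorm_le_coord x a : 0 <= a -> (forall i, `|x i 0| <= a) -> enorm x <= n%:R * a.
Proof.
move=> a0 xa; rewrite -(ler_pXn2r (n := 2)) ?nnegrE ?mulr_ge0 ?enorm_ge0 //.
rewrite enorm_sqr dotE; apply: (le_trans (y := \sum_(i < n) a ^+ 2)).
- apply: ler_sum => i _; rewrite -expr2 -real_normK ?num_real //.
  by rewrite lerXn2r ?nnegrE.
- have nn : (n <= n * n)%N by case: (posnP n) => [->|/leq_pmull].
  rewrite sumr_const card_ord exprMn -[_ *+ n]mulr_natl ler_wpM2r ?sqr_ge0 //.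
  by rewrite expr2 -natrM ler_nat.
Qed.

End Euclidean.

Lemma dot_mulmx (R : realType) m n (A : 'M[R]_(m, n)) x y :
  dot x (A^T *m y) = dot (A *m x) y.
Proof. by rewrite /dot trmx_mul mulmxA. Qed.

Section ClusterPoint.
Local Open Scope classical_set_scope.
Variables (R : realType) (n : nat).

Definition cluster_point (u : nat -> 'cV[R]_n) (x : 'cV[R]_n) : Prop :=
  forall e, 0 < e -> forall K, exists2 k, (K <= k)%N & enorm (u k - x) < e.

(* [rV_compact] is stated for row vectors, hence the transposes. *)
Lemma bounded_cluster_point (u : nat -> 'cV[R]_n) C :
  (forall k, enorm (u k) <= C) -> exists x, cluster_point u x.
Proof.
move=> uC.
have box_compact := @rV_compact _ n (fun=> `[-C, C]) (fun=> @segment_compact R (-C) C).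
have [|y [_ cly]] := box_compact ((fun k => (u k)^T) @ \oo) _.
  exists 0%N => // k _ i; rewrite /= mxE in_itv /= -ler_norml.
  exact: le_trans (coord_le_enorm _ _) (uC k).
exists y^T => e e0 K.
have n1_gt0 : 0 < (n%:R : R) + 1 by rewrite ltr_wpDl.
set e' := e / (n%:R + 1); have e'_gt0 : 0 < e' by rewrite divr_gt0.
have [||w [[k Kk ->]] [_ yuk]] :=
  cly [set w | exists2 k, (K <= k)%N & w = (u k)^T] (ball y e').
- by exists K => // k; exists k.
- exact: nbhsx_ballx.
exists k => //; apply: (le_lt_trans (enorm_le_coord (ltW e'_gt0) _)).
- move=> i; have := yuk ord0 i; rewrite -ball_normE /= !mxE distrC => /ltW; exact.
- by rewrite mulrA ltr_pdivrMr // mulrDr mulr1 mulrC ltrDl.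
Qed.

End ClusterPoint.

Section RealSequences.
Variable R : realType.
Implicit Types (a s E : nat -> R).

Lemma local_nonincreasing a r k0 :
  (forall k, a k <= r -> a k.+1 <= a k) -> a k0 <= r ->
  forall k, (k0 <= k)%N -> a k <= a k0.
Proof.
move=> step ak0 k /subnKC <-; elim: (k - k0)%N => [|j IH]; first by rewrite addn0.
by rewrite addnS; apply: le_trans (step _ (le_trans IH ak0)) IH.
Qed.

Lemma decrement_bound_vanishes E s c : 0 < c -> (forall k, 0 <= E k) ->
  (forall k, 0 <= s k) -> (forall k, c * s k ^+ 2 <= E k - E k.+1) ->
  forall e, 0 < e -> exists K, forall k, (K <= k)%N -> s k < e.
Proof.
move=> c0 E0 s0 dec e e0.
have /nonincreasing_seqP E_noninc : forall k, E k.+1 <= E k.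
  by move=> k; have := dec k; have := sqr_ge0 (s k); nra.
have infE : has_inf (range E) by split; [exists (E 0%N), 0%N | exists 0 => _ [k _ <-]].
have [_ [K _ <-] EK] := inf_adherent (mulr_gt0 c0 (exprn_gt0 2 e0)) infE.
exists K => k Kk.
have inf_le : inf (range E) <= E k.+1 by apply: ge_inf; [case: infE | exists k.+1].
have : c * s k ^+ 2 < c * e ^+ 2 by have := dec k; have := E_noninc _ _ Kk; lra.
by rewrite ltr_pM2l // ltr_pXn2r ?nnegrE ?s0 ?ltW.
Qed.

End RealSequences.

Lemma fejer_cluster_cvg (R : realType) n (u : nat -> 'cV[R]_n) x r : 0 < r ->
  (forall k, enorm (u k - x) <= r -> enorm (u k.+1 - x) <= enorm (u k - x)) ->
  cluster_point u x -> converges_to u x.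
Proof.
move=> r0 step clx e e0.
have er0 : 0 < Num.min e r by rewrite lt_min e0 r0.
have [k0 _] := clx _ er0 0%N; rewrite lt_min => /andP[uk0e uk0r].
by exists k0 => k /(local_nonincreasing step (ltW uk0r)) /le_lt_trans; apply.
Qed.

Lemma descent_step (R : realType) n (e g h : 'cV[R]_n)
    (a b s eta zeta zeta0 nu0 nu1 rho : R) :
  eta <= 1 -> 0 <= zeta -> zeta <= a -> (1 - eta) * s ^+ 2 <= dot e g ->
  a * enorm g <= zeta0 * s -> 0 <= b -> b * enorm h <= nu0 * s ^+ 2 ->
  b * enorm h <= nu1 -> enorm e <= rho ->
  enorm (e - a *: g - b *: h) ^+ 2 <= enorm e ^+ 2
    - 2 * (zeta * (1 - eta) - (nu0 * (rho + nu1) + zeta0 ^+ 2)) * s ^+ 2.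
Proof.
move=> eta1 zeta0_ge0 zeta_a eg ag b0 bh_s bh_nu e_rho.
have a0 : 0 <= a := le_trans zeta0_ge0 zeta_a.
have s0 : 0 <= (1 - eta) * s ^+ 2 by rewrite mulr_ge0 ?sqr_ge0 ?subr_ge0.
have along_g : zeta * (1 - eta) * s ^+ 2 <= a * dot e g.
  by rewrite -mulrA; apply: ler_pM.
have along_h : - (rho * (nu0 * s ^+ 2)) <= b * dot e h.
  have bh0 : 0 <= b * enorm h by rewrite mulr_ge0 ?enorm_ge0.
  have := ler_wpM2l b0 (dot_ge_enorm e h).
  have := ler_pM (enorm_ge0 e) bh0 e_rho bh_s; nra.
have step_sqr : enorm (a *: g + b *: h) ^+ 2 <= 2 * (zeta0 ^+ 2 + nu0 * nu1) * s ^+ 2.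
  have ag0 : 0 <= a * enorm g by rewrite mulr_ge0 ?enorm_ge0.
  have bh0 : 0 <= b * enorm h by rewrite mulr_ge0 ?enorm_ge0.
  have : enorm (a *: g + b *: h) <= a * enorm g + b * enorm h.
    by apply: le_trans (enormD _ _) _; rewrite !enormZ !ger0_norm.
  have := ler_pM ag0 ag0 ag ag; have := ler_pM bh0 bh0 bh_s bh_nu.
  have := sqr_ge0 (a * enorm g - b * enorm h); have := enorm_ge0 (a *: g + b *: h).
  nra.
rewrite -addrA -opprD enormB_sqr dotDr !dotZr; nra.
Qed.

Section ExactDataIteration.
Variables (R : realType) (n m : nat) (F : 'cV[R]_n -> 'cV[R]_m).
Variables (Fd : 'cV[R]_n -> 'M[R]_(m, n)) (Omega : 'cV[R]_n -> Prop) (B eta : R).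
Hypothesis Fd_bounded : forall x, Omega x -> opnorm_le (Fd x) B.
Hypothesis tangential_cone : forall x w, Omega x -> Omega w ->
  enorm (F x - F w - Fd w *m (x - w)) <= eta * enorm (F x - F w).

Lemma residual_lipschitz x w : Omega x -> Omega w ->
  (1 - eta) * enorm (F x - F w) <= B * enorm (x - w).
Proof.
move=> Ox Ow; have := tangential_cone Ox Ow; have := Fd_bounded Ow (x - w).
have := enormD (F x - F w - Fd w *m (x - w)) (Fd w *m (x - w)); rewrite subrK.
lra.
Qed.

Lemma tangential_cone_dot x z v : Omega x -> Omega z -> F z = v ->
  (1 - eta) * enorm (F x - v) ^+ 2 <= dot (x - z) ((Fd x)^T *m (F x - v)).
Proof.
move=> Ox Oz Fz; rewrite dot_mulmx.
have near : enorm (Fd x *m (x - z) - (F x - v)) <= eta * enorm (F x - v).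
  have := tangential_cone Oz Ox; rewrite Fz enormB (enormB (F x)).
  by rewrite -(opprB x) mulmxN opprK opprB addrC.
have := dot_ge_enorm (Fd x *m (x - z) - (F x - v)) (F x - v).
rewrite dotDl dotNl -enorm_sqr.
have := ler_wpM2r (enorm_ge0 (F x - v)) near; nra.
Qed.

Lemma eq_of_approximate_zeros x v : 0 <= B -> eta < 1 -> Omega x ->
  (forall e, 0 < e -> exists w, [/\ Omega w, enorm (w - x) < e & enorm (F w - v) < e]) ->
  F x = v.
Proof.
move=> B0 eta1 Ox approx; have eta1' : 0 < 1 - eta by rewrite subr_gt0.
suff : (1 - eta) * enorm (F x - v) <= 0.
  rewrite pmulr_rle0 // => Q0; apply/subr0_eq/enorm_eq0/le_anti.
  by rewrite Q0 enorm_ge0.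
apply/ler_addgt0Pl => e e0; rewrite addr0.
have c0 : 0 < B + (1 - eta) by rewrite ltr_wpDl.
set e' := e / (B + (1 - eta)).
have [w [Ow wx wv]] := approx e' (divr_gt0 e0 c0).
have -> : e = B * e' + (1 - eta) * e' by rewrite -mulrDl mulrC divfK ?gt_eqF.
have := residual_lipschitz Ox Ow; rewrite (enormB x).
have := enorm_triangle (F x) (F w) v; have := ler_wpM2l B0 (ltW wx).
have := ler_wpM2l (ltW eta1') (ltW wv); nra.
Qed.

Variables (v : 'cV[R]_m) (ud : 'cV[R]_n) (rho zeta zeta0 nu0 nu1 : R).
Variables (u : nat -> 'cV[R]_n) (alpha beta : nat -> R) (h : nat -> 'cV[R]_n).
Hypotheses (B_ge0 : 0 <= B) (eta_lt1 : eta < 1) (rho_gt0 : 0 < rho) (F_ud : F ud = v).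
Hypothesis Omega_near_ud : forall x, enorm (x - ud) <= rho -> Omega x.
Hypothesis u0_near_ud : enorm (u 0%N - ud) <= rho.
Hypothesis u_step : forall k,
  u k.+1 = u k - alpha k *: ((Fd (u k))^T *m (F (u k) - v)) - beta k *: h k.
Hypotheses (zeta_ge0 : 0 <= zeta) (alpha_ge : forall k, zeta <= alpha k).
Hypothesis alpha_le : forall k,
  alpha k * enorm ((Fd (u k))^T *m (F (u k) - v)) <= zeta0 * enorm (F (u k) - v).
Hypothesis beta_ge0 : forall k, 0 <= beta k.
Hypothesis beta_le_res : forall k, beta k * enorm (h k) <= nu0 * enorm (F (u k) - v) ^+ 2.
Hypothesis beta_le : forall k, beta k * enorm (h k) <= nu1.
Hypothesis descent : nu0 * (rho + nu1) + zeta0 ^+ 2 < zeta * (1 - eta).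

Local Notation c := (2 * (zeta * (1 - eta) - (nu0 * (rho + nu1) + zeta0 ^+ 2))).

Lemma fejer_step k z : Omega z -> F z = v -> Omega (u k) -> enorm (u k - z) <= rho ->
  enorm (u k.+1 - z) ^+ 2 <= enorm (u k - z) ^+ 2 - c * enorm (F (u k) - v) ^+ 2.
Proof.
move=> Oz Fz Ouk ukz; rewrite u_step addrAC [u k - _ - z]addrAC.
apply: descent_step => //; first exact: ltW.
exact: tangential_cone_dot.
Qed.

Lemma descent_rate_gt0 : 0 < c.
Proof. by rewrite mulr_gt0 // subr_gt0. Qed.

Lemma fejer_monotone k z : Omega z -> F z = v -> Omega (u k) -> enorm (u k - z) <= rho ->
  enorm (u k.+1 - z) <= enorm (u k - z).
Proof.
move=> Oz Fz Ouk ukz; rewrite -(ler_pXn2r (n := 2)) ?nnegrE ?enorm_ge0 //.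
have := fejer_step Oz Fz Ouk ukz.
have := mulr_ge0 (ltW descent_rate_gt0) (sqr_ge0 (enorm (F (u k) - v))); lra.
Qed.

Lemma Omega_ud : Omega ud.
Proof. by apply: Omega_near_ud; rewrite subrr enorm0 ltW. Qed.

Lemma iterate_near_ud k : enorm (u k - ud) <= rho.
Proof.
apply: le_trans u0_near_ud.
apply: (local_nonincreasing (a := fun j => enorm (u j - ud)) (r := rho)) => // j uj.
exact: fejer_monotone Omega_ud F_ud (Omega_near_ud uj) uj.
Qed.

Lemma iterate_in_Omega k : Omega (u k).
Proof. exact: Omega_near_ud (iterate_near_ud k). Qed.

Lemma residual_vanishes e : 0 < e ->
  exists K, forall k, (K <= k)%N -> enorm (F (u k) - v) < e.
Proof.
apply: (decrement_bound_vanishes (E := fun k => enorm (u k - ud) ^+ 2) descent_rate_gt0).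
- by move=> k; rewrite sqr_ge0.
- by move=> k; rewrite enorm_ge0.
- move=> k; have := fejer_step Omega_ud F_ud (iterate_in_Omega k) (iterate_near_ud k).
  lra.
Qed.

Lemma iteration_converges : exists x, [/\ Omega x, F x = v & converges_to u x].
Proof.
have [x clx] : exists x, cluster_point u x.
  apply: (bounded_cluster_point (C := rho + enorm ud)) => k.
  have := enormD (u k - ud) ud; rewrite subrK; have := iterate_near_ud k; lra.
have x_near_ud : enorm (x - ud) <= rho.
  apply/ler_addgt0Pr => e e0; have [k _ ukx] := clx e e0 0%N.
  have := enorm_triangle x (u k) ud; rewrite (enormB x (u k)); have := iterate_near_ud k; lra.
have Ox := Omega_near_ud x_near_ud.
have Fx : F x = v.
  apply: eq_of_approximate_zeros => // e e0.
  have [K resK] := residual_vanishes e0; have [k Kk ukx] := clx e e0 K.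
  by exists (u k); split => //; [exact: iterate_in_Omega | exact: resK].
exists x; split => //; apply: fejer_cluster_cvg rho_gt0 _ clx => k.
exact: fejer_monotone Ox Fx (iterate_in_Omega k).
Qed.

End ExactDataIteration.

Section StepSizes.
Variable R : realFieldType.
Implicit Types (x a b c g z : R).

Lemma capped_ratio_mul_le x a b g z :
  x = Num.min (a / g) b -> 0 < z -> z <= x -> 0 <= g -> x * g <= a.
Proof.
move=> -> z0 zx g0; have x_le : Num.min (a / g) b <= a / g by rewrite ge_min lexx.
have [g_eq0|g_neq0] := eqVneq g 0.
  (* a / 0 = 0, contradicting 0 < z <= x *)
  by move: x_le zx; rewrite g_eq0 invr0 mulr0; lra.
by rewrite -ler_pdivlMr // lt_def g_neq0.
Qed.

Lemma capped_ratios_bounds x a c b g :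
  x = (if g != 0 then Num.min (Num.min (a / g) (c / g)) b else 0) ->
  0 <= a -> 0 <= c -> 0 <= b -> 0 <= g -> [/\ 0 <= x, x * g <= a & x * g <= c].
Proof.
move=> -> a0 c0 b0 g0; have [g_eq0|g_neq0] /= := eqVneq g 0; first by rewrite mul0r.
have g_gt0 : 0 < g by rewrite lt_def g_neq0.
rewrite !le_min !divr_ge0 // -!ler_pdivlMr // !ge_min !lexx.
by split; rewrite ?orbT.
Qed.

Lemma standing_condition_descent (eta H K zeta : R) :
  0 <= eta -> eta < 1 -> 0 < zeta -> (1 + eta) / (1 - eta) < H ->
  K / (1 - eta - (1 + eta) / H) < zeta -> K < zeta * (1 - eta).
Proof.
move=> eta0 eta1 zeta0 HH Kz; have eta1' : 0 < 1 - eta by rewrite subr_gt0.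
have H0 : 0 < H by apply: le_lt_trans HH; apply: divr_ge0; lra.
have ratio_lt : (1 + eta) / H < 1 - eta by rewrite ltr_pdivrMr // mulrC -ltr_pdivrMr.
have ratio_ge0 : 0 <= (1 + eta) / H by apply: divr_ge0; lra.
have den_le : 1 - eta - (1 + eta) / H <= 1 - eta by lra.
move: Kz; rewrite ltr_pdivrMr ?subr_gt0 //.
have := ler_wpM2l (ltW zeta0) den_le; lra.
Qed.

End StepSizes.

Unset Implicit Arguments.

Theorem mainTheorem4
  (R : realType) (p q M : nat)
  (D : 'cV[R]_(p * q) -> Prop)
  (F : 'cV[R]_(p * q) -> 'cV[R]_M)
  (Fd : 'cV[R]_(p * q) -> 'M[R]_(M, p * q))
  (v : 'cV[R]_M) (Psi : 'cV[R]_M -> 'cV[R]_(p * q))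
  (Rad lam : R) (d : 'I_p * 'I_q -> 'I_p * 'I_q -> R)
  (zeta0 zeta1 nu0 nu1 nu2 zeta wp B eta L H : R)
  (u : nat -> 'cV[R]_(p * q)) (alpha beta : nat -> R) :
  0 < Rad -> 0 < lam -> is_metric d ->
  0 < zeta0 -> 0 < zeta1 -> 0 < nu0 -> 0 < nu1 -> 0 < nu2 -> 0 < zeta ->
  0 < wp -> 0 < B -> 0 <= eta -> eta < 1 -> 0 <= L ->
  (* B_{3 wp}(u0) is contained in D(F) *)
  (forall x, cball (Psi v) (3 * wp) x -> D x) ->
  (* (A1) *)
  (forall x, cball (Psi v) (3 * wp) x ->
     frechet_at D F Fd x /\ deriv_cont_at (cball (Psi v) (3 * wp)) Fd x) ->
  (* (A2) *)
  (forall x, cball (Psi v) (3 * wp) x -> opnorm_le (Fd x) B) ->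
  (* (A3) *)
  (forall x w, cball (Psi v) (3 * wp) x -> cball (Psi v) (3 * wp) w ->
     enorm (F x - F w - Fd w *m (x - w)) <= eta * enorm (F x - F w)) ->
  (* (A4) *)
  (forall x w, cball (Psi v) (3 * wp) x -> cball (Psi v) (3 * wp) w ->
     opnorm_le (Fd x - Fd w) (L * enorm (x - w))) ->
  (* (A5) *)
  (exists ud, cball (Psi v) wp ud /\ F ud = v) ->
  (* standing parameter condition *)
  (1 + eta) / (1 - eta) < H ->
  (nu0 * (wp + nu1) + zeta0 ^+ 2) / (1 - eta - (1 + eta) / H) < zeta ->
  (* the exact-data iteration *)
  u 0%N = Psi v ->
  (forall k, alpha k = Num.min
     (zeta0 * enorm (F (u k) - v) / enorm ((Fd (u k))^T *m (F (u k) - v)))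
     zeta1) ->
  (forall k, beta k =
     if enorm (Lap_apply Rad lam d (u k) (u k)) != 0 then
       Num.min (Num.min
         (nu0 * enorm (F (u k) - v) ^+ 2 / enorm (Lap_apply Rad lam d (u k) (u k)))
         (nu1 / enorm (Lap_apply Rad lam d (u k) (u k)))) nu2
     else 0) ->
  (forall k, zeta <= alpha k) ->
  (forall k, u k.+1 = u k - alpha k *: ((Fd (u k))^T *m (F (u k) - v))
                        - beta k *: Lap_apply Rad lam d (u k) (u k)) ->
  exists x, D x /\ F x = v /\ converges_to u x.
Proof.
move=> _ _ _ _ _ nu0_gt0 nu1_gt0 nu2_gt0 zeta_gt0 wp_gt0 B_gt0 eta_ge0 eta_lt1 _
  ball_in_D _ Fd_bounded tangential_cone _ [ud [ud_near F_ud]] H_cond zeta_cond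
  u0E alphaE betaE alpha_ge u_step.
have Omega_near_ud x : enorm (x - ud) <= wp -> cball (Psi v) (3 * wp) x.
  by move: ud_near; rewrite /cball => ud_near; have := enorm_triangle x ud (Psi v); lra.
have u0_near_ud : enorm (u 0%N - ud) <= wp by rewrite u0E enormB.
have alpha_le k : alpha k * enorm ((Fd (u k))^T *m (F (u k) - v)) <=
    zeta0 * enorm (F (u k) - v).
  exact: capped_ratio_mul_le (alphaE k) zeta_gt0 (alpha_ge k) (enorm_ge0 _).
have [beta_ge0 beta_le_res beta_le] : [/\ forall k, 0 <= beta k,
    forall k, beta k * enorm (Lap_apply Rad lam d (u k) (u k)) <=
      nu0 * enorm (F (u k) - v) ^+ 2
  & forall k, beta k * enorm (Lap_apply Rad lam d (u k) (u k)) <= nu1].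
  by split=> k; case: (capped_ratios_bounds (betaE k) (mulr_ge0 (ltW nu0_gt0) (sqr_ge0 _))
    (ltW nu1_gt0) (ltW nu2_gt0) (enorm_ge0 _)).
have descent := standing_condition_descent eta_ge0 eta_lt1 zeta_gt0 H_cond zeta_cond.
have [x [Ox Fx ux]] := iteration_converges Fd_bounded tangential_cone (ltW B_gt0)
  eta_lt1 wp_gt0 F_ud Omega_near_ud u0_near_ud u_step (ltW zeta_gt0) alpha_ge alpha_le
  beta_ge0 beta_le_res beta_le descent.
by exists x; split; first exact: ball_in_D.
Qed.
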